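(* If a nondegenerate triangle is circumscribed about a hyperbola one of whose foci coincides with the circumcenter of the triangle, then the eccentricity $e$ of the hyperbola satisfies $1<e<3$.
   Context: A triangle is circumscribed about a conic if each of its three sidelines is tangent to the conic. The eccentricity of a hyperbola is $e=c/a$ where $c$ is half the distance between the foci and $a$ is the semi-transverse axis. *)

From HB Require Import structures.
From mathcomp Require Import all_boot all_order all_algebra.
Set Implicit Arguments. Unset Strict Implicit. Unset Printing Implicit Defensive.
Import Order.TTheory GRing.Theory Num.Theory.
Local Open Scope ring_scope.

Section Plane.
Variable R : rcfType.
Definition pt := (R * R)%type.

Definition psub (p q : pt) : pt := (p.1 - q.1, p.2 - q.2).
Definition padd (p q : pt) : pt := (p.1 + q.1, p.2 + q.2).
Definition pscale (k : R) (p : pt) : pt := (k * p.1, k * p.2).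
Definition dot (p q : pt) : R := p.1 * q.1 + p.2 * q.2.
Definition cross (p q : pt) : R := p.1 * q.2 - p.2 * q.1.
Definition perp (p : pt) : pt := (- p.2, p.1).
Definition dist2 (p q : pt) : R := dot (psub p q) (psub p q).

Definition nondeg_triangle (A B C : pt) : Prop := cross (psub B A) (psub C A) != 0.

Definition is_circumcenter (P A B C : pt) : Prop :=
  dist2 P A = dist2 P B /\ dist2 P B = dist2 P C.

(* The hyperbola with center O, (unit) transverse-axis direction u,
   semi-transverse axis a > 0 and semi-conjugate axis b > 0 is the zero set of
     Q(P) = ((P-O).u)^2/a^2 - ((P-O).u^perp)^2/b^2 - 1,
   i.e. x^2/a^2 - y^2/b^2 = 1 in the frame (O; u, u^perp). *)
Definition hypQ (O u : pt) (a b : R) (P : pt) : R :=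
  (dot (psub P O) u) ^+ 2 / a ^+ 2 - (dot (psub P O) (perp u)) ^+ 2 / b ^+ 2 - 1.

Definition hyp_c (a b : R) : R := Num.sqrt (a ^+ 2 + b ^+ 2).
Definition focus1 (O u : pt) (a b : R) : pt := padd O (pscale (hyp_c a b) u).
Definition focus2 (O u : pt) (a b : R) : pt := psub O (pscale (hyp_c a b) u).
Definition eccentricity (a b : R) : R := hyp_c a b / a.

(* The line through X and Y (X <> Y) is tangent to the hyperbola iff the
   restriction t |-> Q(X + t (Y - X)) = qa t^2 + qb t + qc is a genuine
   quadratic (qa <> 0) with a double root (qb^2 = 4 qa qc). *)
Definition tangent_line (O u : pt) (a b : R) (X Y : pt) : Prop :=
  let d := psub Y X in
  let w := psub X O in
  let v := perp u in
  let qa := (dot d u) ^+ 2 / a ^+ 2 - (dot d v) ^+ 2 / b ^+ 2 in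
  let qb := 2 * ((dot w u) * (dot d u) / a ^+ 2 - (dot w v) * (dot d v) / b ^+ 2) in
  let qc := (dot w u) ^+ 2 / a ^+ 2 - (dot w v) ^+ 2 / b ^+ 2 - 1 in
  qa != 0 /\ qb ^+ 2 = 4 * qa * qc.
End Plane.

From HB Require Import structures.
From mathcomp Require Import all_boot all_order all_algebra.
From mathcomp Require Import ring lra.
Import Order.TTheory GRing.Theory Num.Theory.
Set Implicit Arguments. Unset Strict Implicit.
Local Open Scope ring_scope.

(* Work in the frame of the hyperbola, where it is x^2/a^2 - y^2/b^2 = 1 and
   the focus is F = (f, 0) with f^2 = a^2 + b^2 = c^2.  As F is the
   circumcenter, the foot of the perpendicular from F to each side is the
   midpoint of that side, and these feet lie on the auxiliary circle
   x^2 + y^2 = a^2.  So the centre of the hyperbola is the nine-point centre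
   of the triangle, which forces A + B + C = F, and Euler's relation between
   the nine-point centre and the circumcenter gives c^2 = |F|^2 < 9 a^2. *)

Section PlaneGeometry.
Variable R : rcfType.
Implicit Types (a b f : R) (O u A B C F P Q X Y v : pt R).

Definition midpoint P Q : pt R := pscale 2^-1 (padd P Q).

Definition frame O u P : pt R := (dot (psub P O) u, dot (psub P O) (perp u)).

Lemma dist2_ge0 P Q : 0 <= dist2 P Q.
Proof. by case: P Q => [p1 p2] [q1 q2]; rewrite /dist2 /dot addr_ge0 // -expr2 sqr_ge0. Qed.

Lemma dist2_eq0 P Q : (dist2 P Q == 0) = (P == Q).
Proof.
case: P Q => [p1 p2] [q1 q2]; rewrite /dist2 /dot /= -!expr2.
by rewrite paddr_eq0 ?sqr_ge0 // !sqrf_eq0 !subr_eq0 xpair_eqE.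
Qed.

Lemma dot_eq0_cross P Q v :
  cross P Q != 0 -> dot P v = 0 -> dot Q v = 0 -> v = (0, 0).
Proof.
case: P Q v => [p1 p2] [q1 q2] [v1 v2]; rewrite /cross /dot /= => hPQ hP hQ.
have hv1 : (p1 * q2 - p2 * q1) * v1 = q2 * (p1 * v1 + p2 * v2) - p2 * (q1 * v1 + q2 * v2) by ring.
have hv2 : (p1 * q2 - p2 * q1) * v2 = p1 * (q1 * v1 + q2 * v2) - q1 * (p1 * v1 + p2 * v2) by ring.
rewrite hP hQ !mulr0 subrr in hv1 hv2.
by move: hv1 hv2 => /eqP + /eqP; rewrite !mulf_eq0 (negbTE hPQ) /= => /eqP -> /eqP ->.
Qed.

Lemma dot_psub_shift O P Q v : dot (psub Q P) v = dot (psub Q O) v - dot (psub P O) v.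
Proof. by case: O P Q v => [o1 o2] [p1 p2] [q1 q2] [v1 v2]; rewrite /dot /psub /=; ring. Qed.

Lemma frame_psub O u P Q : psub (frame O u Q) (frame O u P) = frame P u Q.
Proof. by rewrite /frame /psub /= -!(dot_psub_shift O). Qed.

Lemma frame_dist2 O u P Q : dot u u = 1 -> dist2 (frame O u P) (frame O u Q) = dist2 P Q.
Proof.
rewrite /dist2 [psub (frame _ _ P) _]frame_psub /frame.
case: P Q u => [p1 p2] [q1 q2] [u1 u2]; rewrite /dot /psub /perp /= => uu.
by rewrite -[RHS]mulr1 -uu; ring.
Qed.

Lemma frame_cross O u A B C : dot u u = 1 ->
  cross (psub (frame O u B) (frame O u A)) (psub (frame O u C) (frame O u A))
  = cross (psub B A) (psub C A).
Proof.
rewrite !frame_psub /frame.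
case: A B C u => [p1 p2] [q1 q2] [r1 r2] [u1 u2]; rewrite /cross /dot /psub /perp /= => uu.
by rewrite -[RHS]mulr1 -uu; ring.
Qed.

Lemma frame_focus1 O u a b : dot u u = 1 -> frame O u (focus1 O u a b) = (hyp_c a b, 0).
Proof.
rewrite /frame /focus1; set c := hyp_c a b.
case: O u => [o1 o2] [u1 u2]; rewrite /dot /psub /padd /pscale /perp /= => uu.
by congr (_, _); [rewrite -[RHS]mulr1 -uu | ]; ring.
Qed.

Lemma frame_focus2 O u a b : dot u u = 1 -> frame O u (focus2 O u a b) = (- hyp_c a b, 0).
Proof.
rewrite /frame /focus2; set c := hyp_c a b.
case: O u => [o1 o2] [u1 u2]; rewrite /dot /psub /padd /pscale /perp /= => uu.
by congr (_, _); [rewrite -[RHS]mulr1 -uu | ]; ring.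
Qed.

Lemma tangency_discriminant a b (p q d1 d2 : R) : a != 0 -> b != 0 ->
  (2 * (p * d1 / a ^+ 2 - q * d2 / b ^+ 2)) ^+ 2 =
    4 * (d1 ^+ 2 / a ^+ 2 - d2 ^+ 2 / b ^+ 2) * (p ^+ 2 / a ^+ 2 - q ^+ 2 / b ^+ 2 - 1) ->
  (d1 * q - d2 * p) ^+ 2 = a ^+ 2 * d2 ^+ 2 - b ^+ 2 * d1 ^+ 2.
Proof.
move=> a0 b0 hdisc; apply/eqP; rewrite -subr_eq0.
have : (2 * (p * d1 / a ^+ 2 - q * d2 / b ^+ 2)) ^+ 2 -
    4 * (d1 ^+ 2 / a ^+ 2 - d2 ^+ 2 / b ^+ 2) * (p ^+ 2 / a ^+ 2 - q ^+ 2 / b ^+ 2 - 1) =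
    4 * ((d1 * q - d2 * p) ^+ 2 - (a ^+ 2 * d2 ^+ 2 - b ^+ 2 * d1 ^+ 2)) / (a ^+ 2 * b ^+ 2).
  by field; rewrite a0 b0.
rewrite hdisc subrr => /esym/eqP.
by rewrite !mulf_eq0 invr_eq0 mulf_eq0 !expf_eq0 (negbTE a0) (negbTE b0) pnatr_eq0 /= orbF.
Qed.

Lemma tangent_line_cross O u a b X Y : a != 0 -> b != 0 ->
  tangent_line O u a b X Y ->
  let d := psub (frame O u Y) (frame O u X) in
  cross d (frame O u X) ^+ 2 = a ^+ 2 * d.2 ^+ 2 - b ^+ 2 * d.1 ^+ 2.
Proof. by move=> a0 b0 [_ /(tangency_discriminant a0 b0) hdisc] d; rewrite /d frame_psub. Qed.

Lemma tangent_line_neq O u a b X Y :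
  tangent_line O u a b X Y -> frame O u X != frame O u Y.
Proof.
case=> + _; apply: contraNneq => eXY.
have : frame X u Y = (0, 0) by rewrite -(frame_psub O) eXY /psub !subrr.
by case=> -> ->; rewrite expr0n /= !mul0r subrr.
Qed.

(* The midpoint of PQ is the foot of the perpendicular from the focus (f, 0)
   to the tangent PQ, and such feet lie on the auxiliary circle of radius a. *)
Lemma focal_midpoint_on_auxiliary_circle a b f P Q :
  f ^+ 2 = a ^+ 2 + b ^+ 2 -> P != Q ->
  cross (psub Q P) P ^+ 2 = a ^+ 2 * (psub Q P).2 ^+ 2 - b ^+ 2 * (psub Q P).1 ^+ 2 ->
  dist2 (f, 0) P = dist2 (f, 0) Q ->
  dot (midpoint P Q) (midpoint P Q) = a ^+ 2.
Proof.
rewrite -dist2_eq0 => hf hPQ htan hF.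
set d := psub Q P.
have key : dist2 P Q * (dot (midpoint P Q) (midpoint P Q) - a ^+ 2)
  = (dist2 (f, 0) Q - dist2 (f, 0) P) / 2 * (2 * d.1 * f + (dist2 (f, 0) Q - dist2 (f, 0) P) / 2)
    + (cross d P ^+ 2 - (a ^+ 2 * d.2 ^+ 2 - b ^+ 2 * d.1 ^+ 2))
    + d.1 ^+ 2 * (f ^+ 2 - a ^+ 2 - b ^+ 2).
  rewrite /d; case: P Q {hPQ htan hF d} => [p1 p2] [q1 q2].
  by rewrite /dist2 /dot /cross /midpoint /psub /padd /pscale /=; field.
have hc0 : f ^+ 2 - a ^+ 2 - b ^+ 2 = 0 by rewrite hf; ring.
move: key; rewrite hF htan hc0 !subrr !mul0r mulr0 !addr0 => /eqP.
by rewrite mulf_eq0 (negbTE hPQ) subr_eq0 => /eqP.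
Qed.

(* The sides CA and CB are both orthogonal to A + B + C - F, since the
   midpoints are equidistant from the origin and the vertices from F. *)
Lemma vertex_sum_eq_circumcenter F A B C :
  cross (psub B A) (psub C A) != 0 ->
  dot (midpoint A B) (midpoint A B) = dot (midpoint B C) (midpoint B C) ->
  dot (midpoint A B) (midpoint A B) = dot (midpoint C A) (midpoint C A) ->
  dist2 F A = dist2 F B -> dist2 F B = dist2 F C ->
  padd A (padd B C) = F.
Proof.
move=> hABC hMBC hMCA hFAB hFBC.
set v := psub (padd A (padd B C)) F.
have hA : dot (psub A C) v = 2 * (dot (midpoint A B) (midpoint A B) - dot (midpoint B C) (midpoint B C))
    + (dist2 F A - dist2 F C) / 2.
  rewrite /v; case: F A B C {hABC hMBC hMCA hFAB hFBC v} => [f1 f2] [a1 a2] [b1 b2] [c1 c2].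
  by rewrite /dist2 /dot /midpoint /psub /padd /pscale /=; field.
have hB : dot (psub B C) v = 2 * (dot (midpoint A B) (midpoint A B) - dot (midpoint C A) (midpoint C A))
    + (dist2 F B - dist2 F C) / 2.
  rewrite /v; case: F A B C {hABC hMBC hMCA hFAB hFBC hA v} => [f1 f2] [a1 a2] [b1 b2] [c1 c2].
  by rewrite /dist2 /dot /midpoint /psub /padd /pscale /=; field.
have hcross : cross (psub A C) (psub B C) = cross (psub B A) (psub C A).
  by case: A B C {hABC hMBC hMCA hFAB hFBC v hA hB} => [a1 a2] [b1 b2] [c1 c2]; rewrite /cross /psub /=; ring.
rewrite hMBC hFAB hFBC !subrr mul0r mulr0 addr0 in hA.
rewrite hMCA hFBC !subrr mul0r mulr0 addr0 in hB.
have : v = (0, 0) by apply: dot_eq0_cross hA hB; rewrite hcross.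
rewrite /v; case: F {hFAB hFBC v hA hB} => f1 f2 [/eqP + /eqP].
by rewrite !subr_eq0 => /eqP <- /eqP <-.
Qed.

(* With F = A + B + C the circumradius is |F - C| = |A + B| = 2 |M|, and the
   centroid identity gives 4 |F|^2 = 36 |M|^2 - (sum of the squared sides). *)
Lemma circumcenter_norm_lt F A B C :
  padd A (padd B C) = F -> A != B ->
  dist2 F A = dist2 F B -> dist2 F B = dist2 F C ->
  dot F F < 9 * dot (midpoint A B) (midpoint A B).
Proof.
move=> hsum; rewrite -dist2_eq0 => hAB hFAB hFBC.
have centroid : 4 * dot F F = 3 * (dist2 F A + dist2 F B + dist2 F C)
    - (dist2 A B + dist2 B C + dist2 C A).
  rewrite -hsum; case: A B C {hsum hAB hFAB hFBC} => [a1 a2] [b1 b2] [c1 c2].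
  by rewrite /dist2 /dot /psub /padd /=; ring.
have radius : dist2 F C = 4 * dot (midpoint A B) (midpoint A B).
  rewrite -hsum; case: A B C {hsum hAB hFAB hFBC centroid} => [a1 a2] [b1 b2] [c1 c2].
  by rewrite /dist2 /dot /midpoint /psub /padd /pscale /=; field.
have hAB_pos : 0 < dist2 A B by rewrite lt_def hAB dist2_ge0.
have := dist2_ge0 B C; have := dist2_ge0 C A.
lra.
Qed.

Lemma frame_focal_midpoint_on_auxiliary_circle O u a b f F X Y :
  0 < a -> 0 < b -> dot u u = 1 ->
  f ^+ 2 = a ^+ 2 + b ^+ 2 -> frame O u F = (f, 0) ->
  tangent_line O u a b X Y -> dist2 F X = dist2 F Y ->
  dot (midpoint (frame O u X) (frame O u Y)) (midpoint (frame O u X) (frame O u Y)) = a ^+ 2.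
Proof.
move=> ha hb uu hf hF hXY hFXY.
apply: focal_midpoint_on_auxiliary_circle hf (tangent_line_neq hXY) _ _.
  by apply: tangent_line_cross hXY; rewrite gt_eqF.
by rewrite -hF !frame_dist2.
Qed.

Lemma hyp_c_sqr a b : hyp_c a b ^+ 2 = a ^+ 2 + b ^+ 2.
Proof. by rewrite sqr_sqrtr // addr_ge0 ?sqr_ge0. Qed.

Lemma eccentricity_bounds a b :
  0 < a -> 0 < b -> hyp_c a b ^+ 2 < 9 * a ^+ 2 -> 1 < eccentricity a b < 3.
Proof.
move=> ha hb hc9.
have hc2 := hyp_c_sqr a b.
have hc0 : 0 <= hyp_c a b by apply: sqrtr_ge0.
rewrite /eccentricity ltr_pdivlMr // ltr_pdivrMr // mul1r.
by apply/andP; split; nra.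
Qed.

End PlaneGeometry.

Theorem corollary2p5 (R : rcfType) (O u : pt R) (a b : R) (A B C : pt R) :
  0 < a -> 0 < b -> dot u u = 1 ->
  nondeg_triangle A B C ->
  tangent_line O u a b A B ->
  tangent_line O u a b B C ->
  tangent_line O u a b C A ->
  (is_circumcenter (focus1 O u a b) A B C \/ is_circumcenter (focus2 O u a b) A B C) ->
  1 < eccentricity a b < 3.
Proof.
move=> ha hb uu + tAB tBC tCA hfocus.
rewrite /nondeg_triangle -(frame_cross O _ _ _ uu) => hABC.
have [f hf [F hF [hFAB hFBC]]] : exists2 f, f ^+ 2 = a ^+ 2 + b ^+ 2 &
    exists2 F, frame O u F = (f, 0) & is_circumcenter F A B C.
  case: hfocus => hcirc; [exists (hyp_c a b) | exists (- hyp_c a b)];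
    rewrite ?sqrrN ?hyp_c_sqr //.
    by exists (focus1 O u a b); first exact: frame_focus1.
  by exists (focus2 O u a b); first exact: frame_focus2.
have mAB := frame_focal_midpoint_on_auxiliary_circle ha hb uu hf hF tAB hFAB.
have mBC := frame_focal_midpoint_on_auxiliary_circle ha hb uu hf hF tBC hFBC.
have mCA := frame_focal_midpoint_on_auxiliary_circle ha hb uu hf hF tCA
  (etrans (esym hFBC) (esym hFAB)).
have [eAB eBC] : dist2 (f, 0) (frame O u A) = dist2 (f, 0) (frame O u B) /\
    dist2 (f, 0) (frame O u B) = dist2 (f, 0) (frame O u C).
  by rewrite -hF !frame_dist2.
have hsum := vertex_sum_eq_circumcenter hABC
  (etrans mAB (esym mBC)) (etrans mAB (esym mCA)) eAB eBC.
have := circumcenter_norm_lt hsum (tangent_line_neq tAB) eAB eBC.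
rewrite mAB /dot /= mulr0 addr0 -expr2 hf -hyp_c_sqr.
exact: eccentricity_bounds.
Qed.
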